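(* Let $\Phi$ be a family of spherical simplices generating the reflection group $B_n$. Then there exists a unique embedding of $\Phi$ into $B_n$, up to the action of the Weyl group of $B_n$.
   Context: A family of spherical simplices in $S^{n-1}$ is the set of $2^n$ simplices cut out by $n$ hyperplanes through the origin in $\mathbb{R}^n$ with linearly independent unit normals $f_1,\dots,f_n$; it is encoded by $\pm f_1,\dots,\pm f_n$, and it generates the group generated by the reflections in the hyperplanes $f_i^\perp$. Let $\Delta(B_n)=\{\pm h_i,\ \pm h_i\pm h_j:1\le i<j\le n\}$ ($h_1,\dots,h_n$ the standard basis of $\mathbb{R}^n$) with Weyl group $W$. An embedding of $\Phi$ into $B_n$ is a realization of $\Phi$ (by an isometry) such that the normal vectors $\pm f_1,\dots,\pm f_n$, suitably normalized, are chosen from $\Delta(B_n)$. Two embeddings are considered the same if they differ by an element of $W$. *)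

From HB Require Import structures.
From mathcomp Require Import all_boot all_order all_algebra.
From mathcomp Require Import reals.
Set Implicit Arguments. Unset Strict Implicit. Unset Printing Implicit Defensive.
Import Order.TTheory GRing.Theory Num.Theory.
Local Open Scope ring_scope.

Section Defs.
Variables (R : realType) (n : nat).

Definition dotv (u v : 'rV[R]_n) : R := (u *m v^T) 0 0.

(* orthogonal matrix; it acts on row vectors by v |-> v *m g *)
Definition orthogonal_mx (g : 'M[R]_n) : Prop := g *m g^T = 1%:M.

Definition refl (f : 'rV[R]_n) : 'M[R]_n :=
  1%:M - (2 / dotv f f) *: (f^T *m f).

Inductive gen_by (S : 'M[R]_n -> Prop) : 'M[R]_n -> Prop :=
| gen_one : gen_by S 1%:M
| gen_mul : forall w s, gen_by S w -> S s -> gen_by S (w *m s)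
| gen_inv : forall w, gen_by S w -> gen_by S (invmx w).

Definition hvec (i : 'I_n) : 'rV[R]_n := delta_mx 0 i.

Definition B_root (v : 'rV[R]_n) : Prop :=
  (exists i, v = hvec i \/ v = - hvec i) \/
  (exists i j : 'I_n, (i < j)%N /\
     (v = hvec i + hvec j \/ v = hvec i - hvec j \/
      v = - hvec i + hvec j \/ v = - hvec i - hvec j)).

Definition weylB (w : 'M[R]_n) : Prop :=
  gen_by (fun s => exists r, B_root r /\ s = refl r) w.

Definition refl_group (f : 'I_n -> 'rV[R]_n) (w : 'M[R]_n) : Prop :=
  gen_by (fun s => exists i, s = refl (f i)) w.

(* f_1..f_n are linearly independent unit vectors: the data of a family Phi
   of spherical simplices in S^{n-1} *)
Definition simplex_family (f : 'I_n -> 'rV[R]_n) : Prop :=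
  (forall i, dotv (f i) (f i) = 1) /\ row_free (\matrix_(i < n) f i).

(* Phi generates the reflection group B_n: its reflection group is
   orthogonally conjugate to W(B_n) *)
Definition generates_Bn (f : 'I_n -> 'rV[R]_n) : Prop :=
  exists h : 'M[R]_n, orthogonal_mx h /\
    forall M, refl_group f M <-> weylB (h^T *m M *m h).

(* an embedding of Phi into B_n: an isometry g carrying every normal f_i
   to a (normalized, i.e. positive multiple of a) root of B_n *)
Definition embedding (f : 'I_n -> 'rV[R]_n) (g : 'M[R]_n) : Prop :=
  orthogonal_mx g /\
  forall i, exists r, B_root r /\ exists c : R, 0 < c /\ f i *m g = c *: r.

Definition normals (f : 'I_n -> 'rV[R]_n) (g : 'M[R]_n) (v : 'rV[R]_n) : Prop :=
  exists i, v = f i *m g \/ v = - (f i *m g).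

(* two embeddings are the same if they differ by an element of W *)
Definition same_embedding (f : 'I_n -> 'rV[R]_n) (g g' : 'M[R]_n) : Prop :=
  exists w, weylB w /\ forall v, normals f (g *m w) v <-> normals f g' v.

End Defs.

(* The Weyl group W of B_n is the group of signed permutation matrices, and a
   reflection lies in W exactly when its normal is a multiple of a root of B_n.
   Hence an isometry g0 conjugating the reflection group of Phi onto W is an
   embedding, and for any other embedding g the isometry g0^T g maps every root
   to a multiple of a root.  For n >= 3 such an isometry is a signed
   permutation: a basis vector sent to a multiple of h_p +- h_q would force all
   the other basis vectors into the plane of h_p and h_q.  So g0^T g lies in W.
   For n = 2 the isometry g0^T g may be the rotation by pi/4; then Phi has one
   normal along a short root and one along a long root, and composing with the
   reflection exchanging these two normals yields an element of W with the same
   set of normals. *)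

From HB Require Import structures.
From mathcomp Require Import all_boot all_order all_algebra.
From mathcomp Require Import reals.
From mathcomp Require Import ring lra zify.
Set Implicit Arguments. Unset Strict Implicit. Unset Printing Implicit Defensive.
Import Order.TTheory GRing.Theory Num.Theory.
Local Open Scope ring_scope.

Section Reflections.
Context {R : realType} {n : nat}.
Implicit Types (u v w : 'rV[R]_n) (A B M : 'M[R]_n).
Local Notation h := (@hvec R n).

Lemma hvecE i k : h i 0 k = (k == i)%:R.
Proof. by rewrite /hvec mxE eqxx. Qed.

Lemma hvec_neq0 i : h i != 0.
Proof. by apply/eqP => /rowP /(_ i); rewrite hvecE !mxE eqxx => /eqP; rewrite oner_eq0. Qed.

Lemma mul_hvec_mx i M : h i *m M = row i M.
Proof. by rewrite rowE. Qed.

Lemma hvec_mx_entry i M k : (h i *m M) 0 k = M i k.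
Proof. by rewrite mul_hvec_mx mxE. Qed.

Lemma mx_hvec_inj A B : (forall i, h i *m A = h i *m B) -> A = B.
Proof. by move=> eqAB; apply/row_matrixP => i; rewrite -!mul_hvec_mx. Qed.

Lemma hvec_neq_scale k j s : k != j -> h k != s *: h j.
Proof.
move=> kj; apply/eqP => /rowP /(_ k) /eqP.
by rewrite hvecE mxE hvecE eqxx (negPf kj) mulr0 oner_eq0.
Qed.

Lemma hvec_neq p q : p != q -> h p != h q.
Proof. by move=> pq; rewrite -[h q]scale1r hvec_neq_scale. Qed.

Lemma exists_entry_neq0 u : u != 0 -> exists k, u 0 k != 0.
Proof.
move=> u0; apply/existsP; apply: contraR u0 => /existsPn u0.
by apply/eqP/rowP => k; rewrite mxE; apply/eqP/negbNE.
Qed.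

Lemma dotvE u v : dotv u v = \sum_k u 0 k * v 0 k.
Proof. by rewrite /dotv mxE; apply: eq_bigr => k _; rewrite mxE. Qed.

Lemma dotvC u v : dotv u v = dotv v u.
Proof. by rewrite !dotvE; apply: eq_bigr => k _; rewrite mulrC. Qed.

Lemma dotvDl u v w : dotv (u + v) w = dotv u w + dotv v w.
Proof. by rewrite /dotv mulmxDl mxE. Qed.

Lemma dotvZl a u w : dotv (a *: u) w = a * dotv u w.
Proof. by rewrite /dotv -scalemxAl mxE. Qed.

Lemma dotvNl u w : dotv (- u) w = - dotv u w.
Proof. by rewrite -scaleN1r dotvZl mulN1r. Qed.

Lemma dotvBl u v w : dotv (u - v) w = dotv u w - dotv v w.
Proof. by rewrite dotvDl dotvNl. Qed.

Lemma dotvZr a u w : dotv w (a *: u) = a * dotv w u.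
Proof. by rewrite dotvC dotvZl dotvC. Qed.

Lemma dotvBr u v w : dotv w (u - v) = dotv w u - dotv w v.
Proof. by rewrite dotvC dotvBl !(dotvC w). Qed.

Lemma dotv_hvecr u i : dotv u (h i) = u 0 i.
Proof. by rewrite /dotv /hvec trmx_delta -colE mxE. Qed.

Lemma dotv_hvecl u i : dotv (h i) u = u 0 i.
Proof. by rewrite dotvC dotv_hvecr. Qed.

Lemma dotv_hvec i j : dotv (h i) (h j) = (i == j)%:R.
Proof. by rewrite dotv_hvecr hvecE eq_sym. Qed.

Lemma hvec_unit i : dotv (h i) (h i) = 1.
Proof. by rewrite dotv_hvec eqxx. Qed.

Lemma dotvv_eq0 u : (dotv u u == 0) = (u == 0).
Proof.
apply/eqP/eqP => [uu0|->]; last by rewrite /dotv mul0mx mxE.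
apply/rowP => k; rewrite mxE; apply/eqP; rewrite -sqrf_eq0; apply/eqP/le_anti.
rewrite sqr_ge0 andbT -uu0 dotvE (bigD1 k) //= expr2 lerDl.
by apply: sumr_ge0 => j _; rewrite -expr2 sqr_ge0.
Qed.

Lemma orthogonal_mxC M : orthogonal_mx M -> M^T *m M = 1%:M.
Proof. exact: mulmx1C. Qed.

Lemma orthogonal_mx_tr M : orthogonal_mx M -> orthogonal_mx M^T.
Proof. by move=> oM; rewrite /orthogonal_mx trmxK orthogonal_mxC. Qed.

Lemma orthogonal_mxM A B :
  orthogonal_mx A -> orthogonal_mx B -> orthogonal_mx (A *m B).
Proof.
by move=> oA oB; rewrite /orthogonal_mx trmx_mul mulmxA -(mulmxA A) oB mulmx1 oA.
Qed.

Lemma orthogonal_mx1 : orthogonal_mx (1%:M : 'M[R]_n).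
Proof. by rewrite /orthogonal_mx trmx1 mulmx1. Qed.

Lemma invmx_orthogonal M : orthogonal_mx M -> invmx M = M^T.
Proof.
move=> oM; have [uM _] := mulmx1_unit oM.
by rewrite -[RHS]mul1mx -(mulVmx uM) -mulmxA oM mulmx1.
Qed.

Lemma dotv_orthogonal M u v :
  orthogonal_mx M -> dotv (u *m M) (v *m M) = dotv u v.
Proof. by move=> oM; rewrite /dotv trmx_mul mulmxA -(mulmxA u) oM mulmx1. Qed.

Lemma orthogonal_mx_neq0 M u : orthogonal_mx M -> u != 0 -> u *m M != 0.
Proof.
move=> oM; apply: contra => /eqP uM0.
by rewrite -dotvv_eq0 -(dotv_orthogonal _ _ oM) uM0 dotvv_eq0.
Qed.

Lemma orthogonal_conjK M A : orthogonal_mx M -> M^T *m (M *m A *m M^T) *m M = A.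
Proof.
by move=> oM; rewrite !mulmxA orthogonal_mxC // mul1mx -mulmxA orthogonal_mxC // mulmx1.
Qed.

Lemma refl_apply u v : u *m refl v = u - (2 / dotv v v * dotv u v) *: v.
Proof.
rewrite /refl mulmxBr mulmx1 -scalemxAr mulmxA (mx11_scalar (u *m v^T)).
by rewrite mul_scalar_mx scalerA.
Qed.

Lemma refl_tr v : (refl v)^T = refl v.
Proof. by rewrite /refl raddfB /= trmx1 linearZ /= trmx_mul trmxK. Qed.

Lemma reflK v u : v != 0 -> u *m refl v *m refl v = u.
Proof.
rewrite -dotvv_eq0 => vv0; rewrite !refl_apply dotvBl dotvZl.
by apply/rowP => k; rewrite !mxE; field.
Qed.

Lemma refl_mx_invol v : v != 0 -> refl v *m refl v = 1%:M.
Proof. by move=> v0; apply: mx_hvec_inj => i; rewrite mulmxA reflK // mulmx1. Qed.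

Lemma refl_orthogonal v : v != 0 -> orthogonal_mx (refl v).
Proof.
by move=> v0; rewrite /orthogonal_mx refl_tr refl_mx_invol.
Qed.

Lemma reflZ c v : c != 0 -> refl (c *: v) = refl v.
Proof.
move=> c0; rewrite /refl dotvZl dotvZr [(c *: v)^T]linearZ /= -scalemxAl -scalemxAr !scalerA.
congr (_ - _ *: _); have [->|vv0] := eqVneq (dotv v v) 0.
  by rewrite !(mulr0, invr0, mul0r).
by field; rewrite c0 vv0.
Qed.

Lemma reflN v : refl (- v) = refl v.
Proof. by rewrite -scaleN1r reflZ // oppr_eq0 oner_eq0. Qed.

Lemma reflBC u v : refl (u - v) = refl (v - u).
Proof. by rewrite -opprB reflN. Qed.

Lemma refl_conj v M :
  orthogonal_mx M -> M^T *m refl v *m M = refl (v *m M).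
Proof.
move=> oM; rewrite /refl dotv_orthogonal // mulmxBr mulmxBl mulmx1 orthogonal_mxC //.
by rewrite -scalemxAr -scalemxAl trmx_mul !mulmxA.
Qed.

Lemma refl_fix u v : dotv u v = 0 -> u *m refl v = u.
Proof. by move=> uv0; rewrite refl_apply uv0 mulr0 scale0r subr0. Qed.

Lemma refl_self v : v *m refl v = - v.
Proof.
have [->|v0] := eqVneq v 0; first by rewrite mul0mx oppr0.
by rewrite refl_apply divfK ?dotvv_eq0 //; apply/rowP => k; rewrite !mxE; ring.
Qed.

Lemma refl_swap u v :
  dotv u u = 1 -> dotv v v = 1 -> u != v -> u *m refl (u - v) = v.
Proof.
move=> uu1 vv1 uv; have: dotv (u - v) (u - v) != 0 by rewrite dotvv_eq0 subr_eq0.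
rewrite refl_apply !(dotvBl, dotvBr) uu1 vv1 (dotvC v u) => d0.
have -> : 2 / (1 - dotv u v - (dotv u v - 1)) * (1 - dotv u v) = 1 by field.
by rewrite scale1r opprB addrC subrK.
Qed.

Lemma refl_neq_orthogonal (a b : 'rV[R]_n) : a != 0 -> dotv a b = 0 -> refl a != refl b.
Proof.
move=> a0 ab; apply/eqP => Eab; move: a0.
rewrite -dotvv_eq0 -eqNr -dotvNl -refl_self Eab (refl_fix ab).
by rewrite eqxx.
Qed.

End Reflections.

Section RootDirections.
Context {R : realType} {n : nat}.
Implicit Types (u v w r : 'rV[R]_n) (A B M : 'M[R]_n) (s x c : R).
Local Notation h := (@hvec R n).

Definition sign s := s = 1 \/ s = -1.

Lemma signM s x : sign s -> sign x -> sign (s * x).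
Proof. by case=> ->; case=> ->; rewrite ?mulN1r ?mul1r ?opprK; [left|right|right|left]. Qed.

Lemma signN s : sign s -> sign (- s).
Proof. by case=> ->; rewrite ?opprK; [right|left]. Qed.

Lemma sign_neq0 s : sign s -> s != 0.
Proof. by case=> ->; rewrite ?oppr_eq0 oner_eq0. Qed.

Lemma sign_sqr s : sign s -> s * s = 1.
Proof. by case=> ->; rewrite ?mulrNN mulr1. Qed.

Definition signed_hvec u := exists j s, sign s /\ u = s *: h j.

Definition signed_perm_mx M := orthogonal_mx M /\ forall i, signed_hvec (h i *m M).

(* Nonzero multiples of the short roots [h k] and of the long roots [h k +- h j]. *)
Definition axis_vec u := exists k x, x != 0 /\ u = x *: h k.

Definition diag_vec u :=
  exists k j x s, [/\ k != j, x != 0, sign s & u = x *: (h k + s *: h j)].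

Definition root_dir u := axis_vec u \/ diag_vec u.

Definition root_multiple u := exists r, B_root r /\ exists c, 0 < c /\ u = c *: r.

Lemma signed_perm_mx1 : signed_perm_mx 1%:M.
Proof.
by split=> [|i]; [exact: orthogonal_mx1 | exists i, 1; rewrite mulmx1 scale1r; split; [left|]].
Qed.

Lemma signed_perm_mxM A B :
  signed_perm_mx A -> signed_perm_mx B -> signed_perm_mx (A *m B).
Proof.
move=> [oA rA] [oB rB]; split=> [|i]; first exact: orthogonal_mxM.
have [j [s [sg_s Ej]]] := rA i; have [k [x [sg_x Ek]]] := rB j.
exists k, (s * x); split; first exact: signM.
by rewrite mulmxA Ej -scalemxAl Ek scalerA.
Qed.

Lemma signed_perm_mx_tr M : signed_perm_mx M -> signed_perm_mx M^T.
Proof.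
move=> [oM rM]; split=> [|j]; first exact: orthogonal_mx_tr.
have [i Mij] : exists i, M i j != 0.
  have [i] := exists_entry_neq0 (orthogonal_mx_neq0 (orthogonal_mx_tr oM) (hvec_neq0 j)).
  by rewrite hvec_mx_entry mxE; exists i.
have [l [s [sg_s Ei]]] := rM i.
have lj : l = j.
  apply/eqP; apply: contraNT Mij => lj.
  by rewrite -hvec_mx_entry Ei mxE hvecE (eq_sym j) (negPf lj) mulr0.
exists i, s; split=> //.
have : h i *m M *m M^T = h i by rewrite -mulmxA oM mulmx1.
rewrite Ei lj -scalemxAl => /(congr1 (fun v => s *: v)).
by rewrite scalerA (sign_sqr sg_s) scale1r => ->.
Qed.

Lemma signed_perm_refl u : root_dir u -> signed_perm_mx (refl u).
Proof.
case=> [[k [x [x0 ->]]]|[k [j [x [s [kj x0 sg_s ->]]]]]]; rewrite reflZ //.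
  split=> [|i]; first exact/refl_orthogonal/hvec_neq0.
  have [->|ik] := eqVneq i k.
    by exists k, (-1); rewrite refl_self scaleN1r; split=> //; right.
  by exists i, 1; rewrite refl_fix ?scale1r ?dotv_hvec ?(negPf ik); split=> //; left.
have unit_sj : dotv (- s *: h j) (- s *: h j) = 1.
  by rewrite dotvZl dotvZr hvec_unit mulr1 mulrNN (sign_sqr sg_s).
have hk_sj : h k != - s *: h j by exact: hvec_neq_scale.
have sj_hk : - s *: h j != h k by rewrite eq_sym.
have -> : h k + s *: h j = h k - (- s) *: h j by rewrite scaleNr opprK.
split=> [|i]; first by apply: refl_orthogonal; rewrite subr_eq0.
have [->|ik] := eqVneq i k.
  exists j, (- s); split; first exact: signN.
  exact: refl_swap (hvec_unit k) unit_sj hk_sj.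
have [->|ij] := eqVneq i j.
  exists k, (- s); split; first exact: signN.
  have sj : h j = - s *: (- s *: h j) by rewrite scalerA mulrNN (sign_sqr sg_s) scale1r.
  rewrite reflBC {1}sj -scalemxAl.
  by rewrite (refl_swap unit_sj (hvec_unit k) sj_hk).
exists i, 1; split; first by left.
by rewrite scale1r refl_fix // dotvBr dotvZr !dotv_hvec (negPf ik) (negPf ij) mulr0 subr0.
Qed.

Lemma root_dir_refl_signed_perm u : u != 0 -> signed_perm_mx (refl u) -> root_dir u.
Proof.
move=> u0 [_ rows]; have [k uk] := exists_entry_neq0 u0.
have [j [s [sg_s E]]] := rows k.
set c := 2 / dotv u u * u 0 k.
have c0 : c != 0 by rewrite /c !mulf_neq0 ?invr_eq0 ?dotvv_eq0 ?pnatr_eq0.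
have Eu : u = c^-1 *: (h k - s *: h j).
  by rewrite -E refl_apply dotv_hvecl -/c subKr scalerA mulVf // scale1r.
have [jk|jk] := eqVneq j k.
  have s1 : s != 1 by apply: contraNneq u0 => s1; rewrite Eu jk s1 scale1r subrr scaler0.
  have s1' : 1 - s != 0 by rewrite subr_eq0 eq_sym.
  left; exists k, (c^-1 * (1 - s)); split; first by rewrite mulf_neq0 ?invr_eq0.
  by rewrite Eu jk -{1}[h k]scale1r -scalerBl scalerA.
right; exists k, j, c^-1, (- s); split.
- by rewrite eq_sym.
- by rewrite invr_eq0.
- exact: signN.
- by rewrite Eu scaleNr.
Qed.

Lemma B_root_hvec k : B_root (h k).
Proof. by left; exists k; left. Qed.

Lemma B_rootN r : B_root r -> B_root (- r).
Proof.
case=> [[i [->|->]]|[i [j [ij [->|[->|[->|->]]]]]]].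
- by left; exists i; right.
- by left; exists i; left; rewrite opprK.
all: right; exists i, j; split; first exact: ij.
all: rewrite ?opprD ?opprK.
- by do 3 right.
- by do 2 right; left.
- by right; left.
- by left.
Qed.

Lemma B_root_sign s r : sign s -> B_root r -> B_root (s *: r).
Proof. by case=> -> Br; [rewrite scale1r | rewrite scaleN1r; apply: B_rootN]. Qed.

Lemma B_root_pair k j s : k != j -> sign s -> B_root (h k + s *: h j).
Proof.
move=> kj sg_s; have ordered (i l : 'I_n) : (i < l)%N -> B_root (h i + s *: h l).
  move=> il; right; exists i, l; split; first exact: il.
  by case: sg_s => ->; [rewrite scale1r; left | rewrite scaleN1r; right; left].
case: (ltngtP k j) => [|jk|/val_inj eq_kj]; first exact: ordered.
  have -> : h k + s *: h j = s *: (h j + s *: h k).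
    by rewrite scalerDr scalerA (sign_sqr sg_s) scale1r addrC.
  exact/B_root_sign/ordered.
by rewrite eq_kj eqxx in kj.
Qed.

Lemma root_dirZ c u : c != 0 -> root_dir u -> root_dir (c *: u).
Proof.
move=> c0; case=> [[k [x [x0 ->]]]|[k [j [x [s [kj x0 sg_s ->]]]]]].
  by left; exists k, (c * x); rewrite scalerA mulf_neq0.
by right; exists k, j, (c * x), s; rewrite scalerA mulf_neq0.
Qed.

Lemma root_dir_neq0 u : root_dir u -> u != 0.
Proof.
case=> [[k [x [x0 ->]]]|[k [j [x [s [kj x0 _ ->]]]]]].
  by rewrite scaler_eq0 negb_or x0 hvec_neq0.
by rewrite scaler_eq0 negb_or x0 -[s]opprK scaleNr subr_eq0 hvec_neq_scale.
Qed.

Lemma root_dir_B_root r : B_root r -> root_dir r.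
Proof.
have one_neq0 : (1 : R) != 0 := oner_neq0 R.
have m1_neq0 : (-1 : R) != 0 by rewrite oppr_eq0 oner_eq0.
case=> [[i [->|->]]|[i [j [ij E]]]].
- by left; exists i, 1; rewrite scale1r.
- by left; exists i, (-1); rewrite scaleN1r.
have {}ij : i != j by rewrite neq_ltn ij.
right; case: E => [->|[->|[->|->]]].
- by exists i, j, 1, 1; split; [|exact: one_neq0|left|rewrite !scale1r].
- by exists i, j, 1, (-1); split; [|exact: one_neq0|right|rewrite !scale1r scaleN1r].
- exists i, j, (-1), (-1); split; [exact: ij|exact: m1_neq0|by right|].
  by rewrite !scaleN1r opprD opprK.
- by exists i, j, (-1), 1; split; [|exact: m1_neq0|left|rewrite scaleN1r scale1r opprD].
Qed.

Lemma root_multipleZ x r : x != 0 -> B_root r -> root_multiple (x *: r).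
Proof.
move=> x0 Br; case: (ltrgtP x 0) => [x_lt0|x_gt0|x_eq0]; last by rewrite x_eq0 eqxx in x0.
  by exists (- r); split; [exact: B_rootN | exists (- x); rewrite oppr_gt0 scaleNr scalerN opprK].
by exists r; split=> //; exists x.
Qed.

Lemma root_multipleP u : root_multiple u <-> root_dir u.
Proof.
split=> [[r [Br [c [c_gt0 ->]]]]|].
  by apply: root_dirZ; [rewrite gt_eqF | exact: root_dir_B_root].
case=> [[k [x [x0 ->]]]|[k [j [x [s [kj x0 sg_s ->]]]]]].
  exact/root_multipleZ/B_root_hvec.
exact/root_multipleZ/B_root_pair.
Qed.

Lemma weylB_refl u : root_dir u -> weylB (refl u).
Proof.
move=> /root_multipleP [r [Br [c [c_gt0 ->]]]]; rewrite reflZ ?gt_eqF //.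
by rewrite -[refl r]mul1mx; apply: gen_mul (gen_one _) _; exists r.
Qed.

Lemma weylB_signed_perm M : weylB M -> signed_perm_mx M.
Proof.
elim=> [|w _ _ sw [r [Br ->]]|w _ sw]; first exact: signed_perm_mx1.
  exact: signed_perm_mxM sw (signed_perm_refl (root_dir_B_root Br)).
by rewrite invmx_orthogonal; [exact: signed_perm_mx_tr | case: sw].
Qed.

Lemma root_dir_sub_hvec u k : signed_hvec u -> u != h k -> root_dir (u - h k).
Proof.
move=> [j [s [sg_s ->]]]; have [->|jk] := eqVneq j k => uk.
  left; exists k, (s - 1); split; last by rewrite scalerBl scale1r.
  by rewrite subr_eq0; apply: contraNneq uk => ->; rewrite scale1r.
right; exists k, j, (-1), (- s); split; first by rewrite eq_sym.
- by rewrite oppr_eq0 oner_neq0.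
- exact: signN.
- by rewrite scaleN1r opprD scaleNr opprK addrC.
Qed.

Definition moved M := [set i | h i *m M != h i].

(* Multiplying [M] by the reflection in [h k *m M - h k] sends [h k *m M] back
   to [h k] and fixes every [h i] already fixed by [M]. *)
Lemma signed_perm_weylB M : signed_perm_mx M -> weylB M.
Proof.
have [m] := ubnP #|moved M|; elim: m M => // m IH M card_lt sM.
have [moved0|/set0Pn [k]] := eqVneq (moved M) set0.
  suff -> : M = 1%:M by exact: gen_one.
  apply: mx_hvec_inj => i; rewrite mulmx1; apply/eqP/negbNE.
  by rewrite -(@in_set _ (fun i => h i *m M != h i)) -/(moved M) moved0 inE.
rewrite inE => moved_k; have [oM rows] := sM.
set r := h k *m M - h k.
have r_root : root_dir r by exact: root_dir_sub_hvec.
set M' := M *m refl r.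
have -> : M = M' *m refl r by apply: mx_hvec_inj => i; rewrite !mulmxA reflK ?subr_eq0.
apply: gen_mul; last by case/root_multipleP: r_root => r' [Br' [c [c_gt0 ->]]];
  exists r'; rewrite reflZ ?gt_eqF.
apply: IH; last exact: signed_perm_mxM (signed_perm_refl r_root).
rewrite -ltnS; apply: leq_trans card_lt; apply/proper_card/properP; split.
  apply/subsetP => i; rewrite !inE; apply: contraNN => /eqP fix_i.
  rewrite /M' mulmxA fix_i refl_fix // dotvBr -{1}fix_i dotv_orthogonal //.
  by rewrite subrr.
exists k; rewrite !inE // negbK /M' mulmxA refl_swap //.
  by rewrite dotv_orthogonal // dotv_hvec eqxx.
by rewrite dotv_hvec eqxx.
Qed.

Lemma weylBP M : weylB M <-> signed_perm_mx M.
Proof. by split; [exact: weylB_signed_perm | exact: signed_perm_weylB]. Qed.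

Lemma axis_diag_vec (u : 'rV[R]_n) : axis_vec u -> diag_vec u -> False.
Proof.
move=> [t [y [_ ->]]] [k [j [x [s [kj x0 sg_s E]]]]].
have coord m : y * (t == m)%:R = x * ((k == m)%:R + s * (j == m)%:R).
  by rewrite -(dotv_hvec t m) -dotvZl E dotvZl dotvDl dotvZl !dotv_hvec.
have := coord k; have := coord j; rewrite !eqxx (negPf kj) (eq_sym j k) (negPf kj).
have [->|tk] := eqVneq t k; rewrite ?eqxx ?(negPf kj) ?(negPf tk) !(mulr0, mulr1, addr0, add0r).
  by move=> /eqP; rewrite eq_sym mulf_eq0 (negPf x0) (negPf (sign_neq0 sg_s)).
by move=> _ /eqP; rewrite eq_sym (negPf x0).
Qed.

Lemma axis_vec_refl_hvec (u : 'rV[R]_n) p :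
  axis_vec u -> u *m refl (h p) = u \/ u *m refl (h p) = - u.
Proof.
move=> [k [x [_ ->]]]; have [->|kp] := eqVneq k p.
  by right; rewrite -scalemxAl refl_self scalerN.
by left; rewrite refl_fix // dotvZl dotv_hvec (negPf kp) mulr0.
Qed.

Lemma unit_axis_signed_hvec u : axis_vec u -> dotv u u = 1 -> signed_hvec u.
Proof.
move=> [t [x [_ ->]]]; rewrite dotvZl dotvZr hvec_unit mulr1 => /eqP.
rewrite -expr2 sqrf_eq1 => /orP [] /eqP xs; exists t, x; split=> //.
- by left.
- by right.
Qed.

Definition root_preserving (tau : 'M[R]_n) := forall r, B_root r -> root_dir (r *m tau).

End RootDirections.

Section ReflectionGroup.
Context {R : realType} {n : nat}.
Variable f : 'I_n -> 'rV[R]_n.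
Hypothesis f_neq0 : forall i, f i != 0.
Implicit Types (r : 'rV[R]_n) (A B M g : 'M[R]_n).

Lemma refl_group_refl i : refl_group f (refl (f i)).
Proof. by rewrite -[refl _]mul1mx; apply: gen_mul (gen_one _) _; exists i. Qed.

Lemma refl_group_orthogonal M : refl_group f M -> orthogonal_mx M.
Proof.
elim=> [|w _ _ ow [i ->]|w _ ow]; first exact: orthogonal_mx1.
  exact: orthogonal_mxM ow (refl_orthogonal (f_neq0 i)).
by rewrite invmx_orthogonal //; exact: orthogonal_mx_tr.
Qed.

Lemma refl_group_conj_ind (Q : 'M[R]_n -> Prop) g M :
  orthogonal_mx g -> Q 1%:M -> (forall A B, Q A -> Q B -> Q (A *m B)) ->
  (forall A, Q A -> Q A^T) -> (forall i, Q (refl (f i *m g))) ->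
  refl_group f M -> Q (g^T *m M *m g).
Proof.
move=> og Q1 QM QT Qf; elim=> [|w s _ Qw [i ->]|w wG Qw].
- by rewrite mulmx1 orthogonal_mxC.
- have -> : g^T *m (w *m refl (f i)) *m g = (g^T *m w *m g) *m (g^T *m refl (f i) *m g).
    by rewrite !mulmxA -(mulmxA _ g) og mulmx1.
  by rewrite refl_conj //; exact: QM.
- rewrite invmx_orthogonal; last exact: refl_group_orthogonal.
  have -> : g^T *m w^T *m g = (g^T *m w *m g)^T by rewrite !trmx_mul trmxK mulmxA.
  exact: QT.
Qed.

Lemma embedding_conj_signed_perm g M :
  embedding f g -> refl_group f M -> signed_perm_mx (g^T *m M *m g).
Proof.
move=> [og fg]; apply: refl_group_conj_ind => //.
- exact: signed_perm_mx1.
- exact: signed_perm_mxM.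
- exact: signed_perm_mx_tr.
- by move=> i; apply/signed_perm_refl/root_multipleP/fg.
Qed.

Lemma normals_swap G1 G2 i j : (forall m, m = i \/ m = j) ->
  f i *m G1 = f j *m G2 -> f j *m G1 = f i *m G2 ->
  forall v, normals f G1 v <-> normals f G2 v.
Proof.
move=> ij Ei Ej v; split=> -[m Em]; case: (ij m) Em => ->.
- by rewrite Ei; exists j.
- by rewrite Ej; exists i.
- by rewrite -Ej; exists j.
- by rewrite -Ei; exists i.
Qed.

Variable g0 : 'M[R]_n.
Hypotheses (og0 : orthogonal_mx g0)
  (g0_gen : forall M, refl_group f M <-> weylB (g0^T *m M *m g0)).

Lemma generating_embedding : embedding f g0.
Proof.
split=> // i; apply/root_multipleP/root_dir_refl_signed_perm.
  exact: orthogonal_mx_neq0.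
by rewrite -refl_conj //; apply/weylBP/g0_gen/refl_group_refl.
Qed.

Lemma refl_group_root_refl r : B_root r -> refl_group f (g0 *m refl r *m g0^T).
Proof.
by move=> Br; apply/g0_gen; rewrite orthogonal_conjK //; exact/weylB_refl/root_dir_B_root.
Qed.

Lemma embedding_root_preserving g : embedding f g -> root_preserving (g0^T *m g).
Proof.
move=> emb_g r Br; have [og _] := emb_g.
have og0g : orthogonal_mx (g0^T *m g) by exact/orthogonal_mxM/og/orthogonal_mx_tr.
apply: root_dir_refl_signed_perm.
  exact/orthogonal_mx_neq0/(root_dir_neq0 (root_dir_B_root Br)).
rewrite -refl_conj // trmx_mul trmxK.
by have := embedding_conj_signed_perm emb_g (refl_group_root_refl Br); rewrite !mulmxA.
Qed.

(* Each generator [refl (f i *m g0)] commutes with [refl v], hence so does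
   every element of the conjugated reflection group, which is W. *)
Lemma refl_root_invariant v r : v != 0 ->
  (forall i, f i *m g0 *m refl v = f i *m g0 \/ f i *m g0 *m refl v = - (f i *m g0)) ->
  B_root r -> refl (r *m refl v) = refl r.
Proof.
move=> v0 eigen_v Br; have ov := refl_orthogonal v0.
rewrite -refl_conj // refl_tr.
have := refl_group_conj_ind (Q := fun A => refl v *m A *m refl v = A) og0 _ _ _ _
  (refl_group_root_refl Br).
rewrite orthogonal_conjK //; apply.
- by rewrite mulmx1 refl_mx_invol.
- move=> A B QA QB; rewrite -{2}QA -{2}QB.
  by rewrite !mulmxA -(mulmxA _ (refl v) (refl v)) refl_mx_invol // mulmx1.
- by move=> A QA; rewrite -{2}QA !trmx_mul refl_tr mulmxA.
- move=> i; rewrite -{1}refl_tr refl_conj //.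
  by case: (eigen_v i) => ->; rewrite ?reflN.
Qed.

Lemma same_embedding_signed_perm g :
  signed_perm_mx (g0^T *m g) -> same_embedding f g0 g.
Proof.
by move=> sg; exists (g0^T *m g); split; [exact/weylBP | rewrite mulmxA og0 mul1mx].
Qed.

End ReflectionGroup.

Lemma no_three_orthonormal_in_plane (R : realFieldType) (x y bp bq cp cq : R) :
  x * bp + y * bq = 0 -> x * cp + y * cq = 0 -> bp * cp + bq * cq = 0 ->
  x ^+ 2 + y ^+ 2 = 1 -> bp ^+ 2 + bq ^+ 2 = 1 -> cp ^+ 2 + cq ^+ 2 = 1 -> False.
Proof.
move=> xb xc bc x1 b1 c1.
have lagrange u v : (x * u + y * v) ^+ 2 + (x * v - y * u) ^+ 2 =
    (x ^+ 2 + y ^+ 2) * (u ^+ 2 + v ^+ 2) by ring.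
have := lagrange bp bq; have := lagrange cp cq.
have : (x ^+ 2 + y ^+ 2) * (bp * cp + bq * cq) =
    (x * bp + y * bq) * (x * cp + y * cq) + (x * bq - y * bp) * (x * cq - y * cp) by ring.
by rewrite xb xc bc x1 b1 c1; nra.
Qed.

Section HighDimension.
Context {R : realType} {n : nat}.
Implicit Types (u v : 'rV[R]_n) (tau : 'M[R]_n) (x s : R).
Local Notation h := (@hvec R n).

Definition supported_on u p q := forall m, m != p -> m != q -> u 0 m = 0.

Lemma dotv_supported_on u v p q : p != q -> supported_on u p q ->
  dotv u v = u 0 p * v 0 p + u 0 q * v 0 q.
Proof.
move=> pq supp_u; rewrite dotvE (bigD1 p) // (bigD1 q) 1?eq_sym //= big1 ?addr0 //.
by move=> m /andP [mp mq]; rewrite supp_u ?mul0r.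
Qed.

Lemma root_dir_supported u : root_dir u -> exists p q, supported_on u p q.
Proof.
case=> [[k [x [_ ->]]]|[k [j [x [s [_ _ _ ->]]]]]]; exists k.
  by exists k => m mk _; rewrite !mxE eqxx /= (negPf mk) mulr0.
by exists j => m mk mj; rewrite !mxE eqxx /= (negPf mk) (negPf mj) mulr0 addr0 mulr0.
Qed.

Lemma root_dir_support3 u m1 m2 m3 : root_dir u ->
  m1 != m2 -> m1 != m3 -> m2 != m3 ->
  u 0 m1 != 0 -> u 0 m2 != 0 -> u 0 m3 != 0 -> False.
Proof.
move=> /root_dir_supported [p [q supp]] m12 m13 m23 u1 u2 u3.
have inpq m : u 0 m != 0 -> m = p \/ m = q.
  move=> um; case: (eqVneq m p) => [|mp]; [by left | right].
  by apply/eqP; apply: contraNT um => /(supp m mp) ->.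
by case: (inpq _ u1) => ?; case: (inpq _ u2) => ?; case: (inpq _ u3) => ?; subst;
  rewrite ?eqxx in m12 m13 m23.
Qed.

Lemma root_dir_orthogonal_supported u v p q : p != q ->
  supported_on u p q -> u 0 p != 0 -> u 0 q != 0 ->
  root_dir v -> root_dir (u + v) -> dotv u v = 0 -> supported_on v p q.
Proof.
move=> pq supp_u up uq rv ruv uv m mp mq; apply/eqP/negPn/negP => vm.
have {}uv : u 0 p * v 0 p + u 0 q * v 0 q = 0 by rewrite -(dotv_supported_on _ pq supp_u).
have pm : p != m by rewrite eq_sym.
have qm : q != m by rewrite eq_sym.
have [vp0|vp] := eqVneq (v 0 p) 0.
  have vq0 : v 0 q = 0.
    by move: uv; rewrite vp0 mulr0 add0r => /eqP; rewrite mulf_eq0 (negPf uq) => /eqP.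
  apply: (root_dir_support3 ruv pq pm qm); rewrite mxE ?vp0 ?vq0 ?addr0 //.
  by rewrite supp_u // add0r.
have vq : v 0 q != 0.
  apply/eqP => vq0; move: uv; rewrite vq0 mulr0 addr0 => /eqP.
  by rewrite mulf_eq0 (negPf up) (negPf vp).
exact: root_dir_support3 rv pq pm qm vp vq vm.
Qed.

Lemma three_distinct (k : 'I_n) : (3 <= n)%N ->
  exists l l' : 'I_n, [/\ l != k, l' != k & l != l'].
Proof.
move=> n3; have lt i : (i < 3)%N -> (i < n)%N by move=> ?; lia.
pose o0 := Ordinal (lt 0%N isT); pose o1 := Ordinal (lt 1%N isT); pose o2 := Ordinal (lt 2%N isT).
have [->|k0] := eqVneq k o0; first by exists o1, o2.
have [->|k1] := eqVneq k o1; first by exists o0, o2.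
by exists o0, o1; rewrite eq_sym k0 eq_sym k1.
Qed.

(* A row [x (h p + s h q)] forces, through the roots [h k + h l], every other
   row into the plane of [h p] and [h q]; three orthonormal rows cannot fit. *)
Lemma root_preserving_signed_perm tau : (3 <= n)%N ->
  orthogonal_mx tau -> root_preserving tau -> signed_perm_mx tau.
Proof.
move=> n3 otau rp_tau; split=> // k.
pose a i := h i *m tau.
have a_unit i : dotv (a i) (a i) = 1 by rewrite dotv_orthogonal // hvec_unit.
have a_orth i j : i != j -> dotv (a i) (a j) = 0.
  by move=> ij; rewrite dotv_orthogonal // dotv_hvec (negPf ij).
have a_root i : root_dir (a i) by apply/rp_tau/B_root_hvec.
have a_sum i j : i != j -> root_dir (a i + a j).
  by move=> ij; rewrite -mulmxDl -[h j]scale1r; apply/rp_tau/B_root_pair => //; left.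
case: (a_root k) => [|[p [q [x [s [pq x0 sg_s ak]]]]]]; first by move/unit_axis_signed_hvec; apply.
exfalso.
have akp : a k 0 p = x by rewrite ak !mxE !eqxx /= (negPf pq) mulr0 addr0 mulr1.
have akq : a k 0 q = x * s by rewrite ak !mxE !eqxx /= eq_sym (negPf pq) mulr1 add0r.
have supp_k : supported_on (a k) p q.
  by move=> m mp mq; rewrite ak !mxE eqxx /= (negPf mp) (negPf mq) mulr0 addr0 mulr0.
have supp_l l : l != k -> supported_on (a l) p q.
  move=> lk; apply: root_dir_orthogonal_supported supp_k _ _ (a_root l) _ _ => //.
  - by rewrite akp.
  - by rewrite akq mulf_neq0 // sign_neq0.
  - by apply: a_sum; rewrite eq_sym.
  - by apply: a_orth; rewrite eq_sym.
have [l [l' [lk l'k ll']]] := three_distinct k n3.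
have dot_pq i j : supported_on (a i) p q ->
    dotv (a i) (a j) = a i 0 p * a j 0 p + a i 0 q * a j 0 q.
  exact: dotv_supported_on.
have supp_l1 := supp_l l lk; have supp_l2 := supp_l l' l'k.
apply: (@no_three_orthonormal_in_plane _ (a k 0 p) (a k 0 q)
  (a l 0 p) (a l 0 q) (a l' 0 p) (a l' 0 q)).
- by rewrite -dot_pq // a_orth // eq_sym.
- by rewrite -dot_pq // a_orth // eq_sym.
- by rewrite -dot_pq // a_orth.
- by rewrite !expr2 -dot_pq.
- by rewrite !expr2 -dot_pq.
- by rewrite !expr2 -dot_pq.
Qed.

End HighDimension.

Lemma orthogonal_diag_sum_axis (F : realFieldType) (a0 a1 b0 b1 : F) :
  a1 ^+ 2 = a0 ^+ 2 -> b1 ^+ 2 = b0 ^+ 2 -> a0 ^+ 2 + a1 ^+ 2 = b0 ^+ 2 + b1 ^+ 2 ->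
  a0 * b0 + a1 * b1 = 0 -> (a0 + b0) * (a1 + b1) = 0.
Proof.
move=> a01 b01 ab_norm ab; apply/eqP; rewrite -sqrf_eq0.
have a1b1 : a1 * b1 = - (a0 * b0) by lra.
have ab0 : a0 ^+ 2 = b0 ^+ 2 by lra.
have -> : ((a0 + b0) * (a1 + b1)) ^+ 2 =
    (a0 + b0) ^+ 2 * (a1 ^+ 2 + b1 ^+ 2 + 2 * (a1 * b1)) by ring.
rewrite a01 b01 a1b1.
have -> : (a0 + b0) ^+ 2 * (a0 ^+ 2 + b0 ^+ 2 + 2 * - (a0 * b0)) =
    (a0 ^+ 2 - b0 ^+ 2) ^+ 2 by ring.
by rewrite ab0 subrr expr0n.
Qed.

Section Plane.
Context {R : realType}.
Implicit Types (u v : 'rV[R]_2) (tau : 'M[R]_2) (x s : R).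
Local Notation h := (@hvec R 2).

Lemma ord2_other (p q m : 'I_2) : p != q -> m = p \/ m = q.
Proof.
move=> pq; case: (eqVneq m p) => [->|mp]; [by left | right; apply: val_inj].
by move: pq mp (ltn_ord p) (ltn_ord q) (ltn_ord m); rewrite -!val_eqE /=; lia.
Qed.

Lemma ord0_neq_max : (ord0 : 'I_2) != ord_max.
Proof. by []. Qed.

Lemma dotv2 u v p q : p != q -> dotv u v = u 0 p * v 0 p + u 0 q * v 0 q.
Proof.
move=> pq; apply: dotv_supported_on => // m mp mq.
by case: (ord2_other m pq) => em; rewrite em eqxx in mp mq.
Qed.

Lemma axis_vec2 u p q : p != q -> u != 0 -> u 0 p * u 0 q = 0 -> axis_vec u.
Proof.
move=> pq u0; have axis_at a b : a != b -> u 0 a = 0 -> axis_vec u.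
  move=> ab ua; exists b, (u 0 b); split.
    apply: contraNneq _ u0 => ub; apply/eqP/rowP => m.
    by case: (ord2_other m ab) => ->; rewrite mxE.
  apply/rowP => m; rewrite mxE hvecE; case: (ord2_other m ab) => ->.
    by rewrite ua (negPf ab) mulr0.
  by rewrite eqxx mulr1.
move/eqP; rewrite mulf_eq0 => /orP [] /eqP; first exact: axis_at pq.
by apply: (axis_at q p); rewrite eq_sym.
Qed.
Lemma axis_row_signed_perm2 tau m :
  orthogonal_mx tau -> axis_vec (h m *m tau) -> signed_perm_mx tau.
Proof.
move=> otau axis_m; split=> // k.
have unit_k : dotv (h k *m tau) (h k *m tau) = 1 by rewrite dotv_orthogonal // hvec_unit.
apply: unit_axis_signed_hvec unit_k; have [->//|km] := eqVneq k m.
have [t [x [x0 Em]]] := axis_m.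
have [t' t't] : exists t' : 'I_2, t' != t.
  by case: (eqVneq t ord0) => [->|t0]; [exists ord_max | exists ord0; rewrite eq_sym].
apply: (axis_vec2 t't); first exact/orthogonal_mx_neq0/hvec_neq0.
have : dotv (h k *m tau) (h m *m tau) = 0 by rewrite dotv_orthogonal // dotv_hvec (negPf km).
by rewrite Em dotvZr dotv_hvecr => /eqP; rewrite mulf_eq0 (negPf x0) /= => /eqP ->; rewrite mulr0.
Qed.

Lemma diag_vec2_sqr u p q : diag_vec u -> u 0 p ^+ 2 = u 0 q ^+ 2.
Proof.
move=> [k [j [x [s [kj _ sg_s ->]]]]].
suff sq m : (x *: (h k + s *: h j)) 0 m ^+ 2 = x ^+ 2 by rewrite !sq.
rewrite -dotv_hvecr dotvZl dotvDl dotvZl !dotv_hvec.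
case: (ord2_other m kj) => ->; rewrite eqxx ?(negPf kj) 1?eq_sym ?(negPf kj) /=.
  by rewrite mulr0 addr0 mulr1.
by rewrite add0r mulr1 exprMn [s ^+ 2]expr2 (sign_sqr sg_s) mulr1.
Qed.
Lemma diag_rows_axis2 tau u : orthogonal_mx tau ->
  (forall i, diag_vec (h i *m tau)) -> diag_vec u -> axis_vec (u *m tau).
Proof.
move=> otau diag_rows diag_u; have [k [j [x [s [kj x0 sg_s Eu]]]]] := diag_u.
apply: (axis_vec2 ord0_neq_max).
  by apply/orthogonal_mx_neq0/root_dir_neq0 => //; right.
have Eut m : (u *m tau) 0 m = x * ((h k *m tau) 0 m + s * (h j *m tau) 0 m).
  by rewrite Eu -scalemxAl mulmxDl -scalemxAl !mxE.
have unit i : (h i *m tau) 0 ord0 ^+ 2 + (h i *m tau) 0 ord_max ^+ 2 = 1.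
  by rewrite !expr2 -(dotv2 _ _ ord0_neq_max) dotv_orthogonal // hvec_unit.
have sq i : (h i *m tau) 0 ord_max ^+ 2 = (h i *m tau) 0 ord0 ^+ 2.
  exact: diag_vec2_sqr.
have ab : (h k *m tau) 0 ord0 * (h j *m tau) 0 ord0 +
         (h k *m tau) 0 ord_max * (h j *m tau) 0 ord_max = 0.
  by rewrite -dotv2 // dotv_orthogonal // dotv_hvec (negPf kj).
have key (a0 a1 b0 b1 : R) : a1 ^+ 2 = a0 ^+ 2 -> b1 ^+ 2 = b0 ^+ 2 ->
    a0 ^+ 2 + a1 ^+ 2 = 1 -> b0 ^+ 2 + b1 ^+ 2 = 1 -> a0 * b0 + a1 * b1 = 0 ->
    (a0 + s * b0) * (a1 + s * b1) = 0.
  have s2 : s ^+ 2 = 1 by rewrite expr2 sign_sqr.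
  move=> a01 b01 a_unit b_unit ab'; apply: orthogonal_diag_sum_axis.
  - exact: a01.
  - by rewrite !exprMn b01.
  - by rewrite !exprMn s2 !mul1r a_unit b_unit.
  - by rewrite mulrCA [a1 * _]mulrCA -mulrDr ab' mulr0.
by rewrite !Eut mulrACA (key _ _ _ _ (sq k) (sq j) (unit k) (unit j) ab) mulr0.
Qed.
Lemma hvec_refl_swap2 k j :
  k != j -> h k *m refl (h ord0 - h ord_max) = h j.
Proof.
have sw p q : p != q -> h p *m refl (h p - h q) = h q.
  by move=> pq; rewrite (refl_swap (hvec_unit p) (hvec_unit q) (hvec_neq pq)).
move=> kj; case: (ord2_other k ord0_neq_max) => ek; rewrite ek in kj *.
  by case: (ord2_other j ord0_neq_max) kj => ->; rewrite ?eqxx // => _; apply: sw.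
by case: (ord2_other j ord0_neq_max) kj => ->; rewrite ?eqxx // => _; rewrite reflBC; apply: sw.
Qed.

Lemma diag_vec2_refl u :
  diag_vec u -> u *m refl (h ord0 - h ord_max) = u \/ u *m refl (h ord0 - h ord_max) = - u.
Proof.
move=> [k [j [x [s [kj _ sg_s ->]]]]]; have jk : j != k by rewrite eq_sym.
have -> : x *: (h k + s *: h j) *m refl (h ord0 - h ord_max) = s *: (x *: (h k + s *: h j)).
  rewrite -scalemxAl mulmxDl -scalemxAl (hvec_refl_swap2 kj) (hvec_refl_swap2 jk).
  rewrite scalerA mulrC -scalerA; congr (_ *: _).
  by rewrite scalerDr scalerA (sign_sqr sg_s) scale1r addrC.
by case: sg_s => ->; [left; rewrite scale1r | right; rewrite scaleN1r].
Qed.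

Variables (f : 'I_2 -> 'rV[R]_2) (g0 : 'M[R]_2).
Hypotheses (f_unit : forall i, dotv (f i) (f i) = 1) (og0 : orthogonal_mx g0)
  (g0_gen : forall M, refl_group f M <-> weylB (g0^T *m M *m g0)).

Let f_neq0 i : f i != 0.
Proof. by rewrite -dotvv_eq0 f_unit oner_eq0. Qed.

Lemma refl_group2_axis_diag :
  exists i j, [/\ i != j, axis_vec (f i *m g0) & diag_vec (f j *m g0)].
Proof.
have [_ root_f] := generating_embedding f_neq0 og0 g0_gen.
have {}root_f i : root_dir (f i *m g0) by apply/root_multipleP.
have i01 := ord0_neq_max.
have invariant := refl_root_invariant f_neq0 og0 g0_gen.
case: (root_f ord0) (root_f ord_max) => [ax0|dg0] [ax1|dg1].
- exfalso.
  have eigen i : f i *m g0 *m refl (h ord0) = f i *m g0 \/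
      f i *m g0 *m refl (h ord0) = - (f i *m g0).
    by apply: axis_vec_refl_hvec; case: (ord2_other i i01) => ->.
  have Br : B_root (h ord0 + (-1) *: h ord_max) by apply: B_root_pair => //; right.
  have := invariant _ _ (hvec_neq0 ord0) eigen Br.
  rewrite mulmxDl -scalemxAl refl_self refl_fix; last by rewrite dotv_hvec eq_sym (negPf i01).
  rewrite scaleN1r -opprD reflN; apply/eqP/refl_neq_orthogonal.
    by rewrite -[h ord_max]opprK subr_eq0 -scaleN1r hvec_neq_scale.
  by rewrite dotvDl !dotvBr !dotv_hvec eqxx (negPf i01) eq_sym (negPf i01) /=; lra.
- by exists ord0, ord_max.
- by exists ord_max, ord0; rewrite eq_sym.
- exfalso.
  have eigen i : f i *m g0 *m refl (h ord0 - h ord_max) = f i *m g0 \/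
      f i *m g0 *m refl (h ord0 - h ord_max) = - (f i *m g0).
    by apply: diag_vec2_refl; case: (ord2_other i i01) => ->.
  have v0 : h ord0 - h ord_max != 0 by rewrite subr_eq0 hvec_neq.
  have := invariant _ _ v0 eigen (B_root_hvec ord0).
  rewrite (hvec_refl_swap2 i01); apply/eqP/refl_neq_orthogonal; first exact: hvec_neq0.
  by rewrite dotv_hvec eq_sym (negPf i01).
Qed.

(* [g0^T *m g] may be the rotation by pi/4, which normalises W without lying
   in it; precomposing with the reflection [S] exchanging the two normals of
   Phi fixes this without changing the set of normals. *)
Lemma same_embedding2 g : embedding f g -> same_embedding f g0 g.
Proof.
move=> emb_g; have [og _] := emb_g.
set sigma := g0^T *m g.
have osigma : orthogonal_mx sigma by exact/orthogonal_mxM/og/orthogonal_mx_tr.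
have rp_sigma := embedding_root_preserving f_neq0 og0 g0_gen emb_g.
have [[m axis_m]|diag_rows] :
    (exists m, axis_vec (h m *m sigma)) \/ forall i, diag_vec (h i *m sigma).
  case: (rp_sigma _ (B_root_hvec ord0)) => [a0|d0]; first by left; exists ord0.
  case: (rp_sigma _ (B_root_hvec ord_max)) => [a1|d1]; first by left; exists ord_max.
  by right => i; case: (ord2_other i ord0_neq_max) => ->.
  exact/(same_embedding_signed_perm _ og0)/(axis_row_signed_perm2 osigma axis_m).
have [js [jl [jsl axis_s diag_l]]] := refl_group2_axis_diag.
have unit i : dotv (f i *m g0) (f i *m g0) = 1 by rewrite dotv_orthogonal.
set us := f js *m g0 in axis_s; set ul := f jl *m g0 in diag_l.
have us_ul : us != ul by apply/eqP => E; apply: (axis_diag_vec axis_s); rewrite E.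
set S := refl (us - ul).
have oS : orthogonal_mx S by apply: refl_orthogonal; rewrite subr_eq0.
have swap_s : us *m S = ul := refl_swap (unit js) (unit jl) us_ul.
have ul_us : ul != us by rewrite eq_sym.
have swap_l : ul *m S = us by rewrite /S reflBC (refl_swap (unit jl) (unit js) ul_us).
set g3 := g0 *m S *m sigma.
have Eg3s : f js *m g3 = f jl *m g.
  by rewrite /g3 !mulmxA -/us swap_s /ul -(mulmxA _ g0) og0 mulmx1.
have Eg3l : f jl *m g3 = f js *m g.
  by rewrite /g3 !mulmxA -/ul swap_l /us -(mulmxA _ g0) og0 mulmx1.
have other i : i = js \/ i = jl := ord2_other i jsl.
have [t [x [sg_x Et]]] := unit_axis_signed_hvec axis_s (unit js).
have ht : h t = x *: us by rewrite Et scalerA (sign_sqr sg_x) scale1r.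
have tau_sp : signed_perm_mx (g0^T *m g3).
  have -> : g0^T *m g3 = S *m sigma by rewrite /g3 !mulmxA orthogonal_mxC // mul1mx.
  apply: (axis_row_signed_perm2 (m := t)); first exact: orthogonal_mxM.
  have [k [y [y0 Ek]]] := diag_rows_axis2 osigma diag_rows diag_l.
  exists k, (x * y); split; first exact: mulf_neq0 (sign_neq0 sg_x) y0.
  by rewrite mulmxA ht -!scalemxAl swap_s Ek scalerA.
have [w [Ww Ew]] := same_embedding_signed_perm f og0 tau_sp.
exists w; split=> // v; rewrite Ew.
exact: normals_swap other Eg3s Eg3l v.
Qed.
End Plane.

Theorem corollary2 (R : realType) (n : nat) (f : 'I_n -> 'rV[R]_n) :
  (2 <= n)%N ->
  simplex_family f ->
  generates_Bn f ->
  exists g : 'M[R]_n, embedding f g /\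
    forall g' : 'M[R]_n, embedding f g' -> same_embedding f g g'.
Proof.
move=> n_ge2 [f_unit _] [g0 [og0 g0_gen]].
have f_neq0 i : f i != 0 by rewrite -dotvv_eq0 f_unit oner_eq0.
exists g0; split=> [|g emb_g]; first exact: (generating_embedding f_neq0 og0 g0_gen).
have [n_ge3|n_lt3] := leqP 3 n.
  apply: (same_embedding_signed_perm _ og0).
  apply: (root_preserving_signed_perm n_ge3).
    exact/orthogonal_mxM/emb_g.1/orthogonal_mx_tr.
  exact: (embedding_root_preserving f_neq0 og0 g0_gen emb_g).
have n2 : n = 2 by lia.
by subst n; apply: (same_embedding2 f_unit og0 g0_gen).
Qed.
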